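(* Let $L$ be a frame (a complete lattice in which $a\wedge\bigvee_i b_i=\bigvee_i(a\wedge b_i)$ for all $a$ and all families $(b_i)$), with least element $0$ and greatest element $1$, and let $\tau$ be a topology on the set $L$ all of whose open sets are upper-closed with respect to the order of $L$. Define $\Phi:\tau\to L$ by \[\Phi(U)=\bigvee\{\alpha\in L \mid \exists\beta\in U:\ \alpha\wedge\beta=0\}.\] Then $\Phi$ is a homomorphism of frames: $\Phi(L)=1$, $\Phi(U\cap V)=\Phi(U)\wedge\Phi(V)$ for all $U,V\in\tau$, and $\Phi\bigl(\bigcup_i U_i\bigr)=\bigvee_i\Phi(U_i)$ for every family $(U_i)$ in $\tau$.
   Context: $\tau$ is ordered by inclusion, so it is itself a frame with finite meets given by intersections and arbitrary joins given by unions. *)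

(** Families are represented by their sets of
    values (predicates on the carrier). *)
Record frame := Frame {
  carrier :> Type;
  le : carrier -> carrier -> Prop;
  meet : carrier -> carrier -> carrier;
  sup : (carrier -> Prop) -> carrier;
  le_refl : forall x, le x x;
  le_trans : forall x y z, le x y -> le y z -> le x z;
  le_antisym : forall x y, le x y -> le y x -> x = y;
  meet_glb : forall a b x, le x (meet a b) <-> (le x a /\ le x b);
  sup_lub : forall (S : carrier -> Prop) y,
      le (sup S) y <-> (forall x, S x -> le x y);
  frame_distr : forall a (B : carrier -> Prop),
      meet a (sup B) = sup (fun x => exists b, B b /\ x = meet a b)
}.

Arguments le {f}.
Arguments meet {f}.
Arguments sup {f}.

Definition bot (L : frame) : L := sup (fun _ : L => False).
Definition top (L : frame) : L := sup (fun _ : L => True).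

Definition is_topology {T : Type} (tau : (T -> Prop) -> Prop) : Prop :=
  tau (fun _ => True) /\
  (forall U V, tau U -> tau V -> tau (fun x => U x /\ V x)) /\
  (forall (F : (T -> Prop) -> Prop),
      (forall U, F U -> tau U) -> tau (fun x => exists U, F U /\ U x)).

Definition upper_closed {L : frame} (U : L -> Prop) : Prop :=
  forall x y, le x y -> U x -> U y.

Definition Phi {L : frame} (U : L -> Prop) : L :=
  sup (fun alpha => exists beta, U beta /\ meet alpha beta = bot L).


(* If [a] misses [a'] and [b] misses [b'], then [a /\ b] misses [a' \/ b'] by
   distributivity; when [a' : U] and [b' : V] with [U], [V] upper closed,
   [a' \/ b'] lies in [U /\ V], which gives the hard inequality
   [Phi U /\ Phi V <= Phi (U /\ V)]. The remaining equations hold for arbitrary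
   subsets: [0] witnesses [Phi L = 1], and [Phi] visibly turns unions of
   subsets into joins. *)

Section FrameFacts.

Context {L : frame}.

Lemma le_sup (S : L -> Prop) x : S x -> le x (sup S).
Proof. intro Sx. exact (proj1 (sup_lub L S (sup S)) (le_refl L _) x Sx). Qed.

Lemma sup_le (S : L -> Prop) y : (forall x, S x -> le x y) -> le (sup S) y.
Proof. exact (proj2 (sup_lub L S y)). Qed.

Lemma meet_le_l (a b : L) : le (meet a b) a.
Proof. exact (proj1 (proj1 (meet_glb L a b _) (le_refl L _))). Qed.

Lemma meet_le_r (a b : L) : le (meet a b) b.
Proof. exact (proj2 (proj1 (meet_glb L a b _) (le_refl L _))). Qed.

Lemma le_meet (a b x : L) : le x a -> le x b -> le x (meet a b).
Proof. intros xa xb. exact (proj2 (meet_glb L a b x) (conj xa xb)). Qed.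

Lemma meetC (a b : L) : meet a b = meet b a.
Proof. apply le_antisym; apply le_meet; auto using meet_le_l, meet_le_r. Qed.

Lemma bot_le (x : L) : le (bot L) x.
Proof. apply sup_le. intros _ []. Qed.

Lemma le_bot_eq (x : L) : le x (bot L) -> x = bot L.
Proof. intro xbot. apply le_antisym; auto using bot_le. Qed.

Definition join (a b : L) : L := sup (fun x => x = a \/ x = b).

Lemma le_join_l (a b : L) : le a (join a b).
Proof. apply le_sup. now left. Qed.

Lemma le_join_r (a b : L) : le b (join a b).
Proof. apply le_sup. now right. Qed.

Lemma meet_join_eq_bot (a b a' b' : L) :
  meet a a' = bot L -> meet b b' = bot L -> meet (meet a b) (join a' b') = bot L.
Proof.
  intros aa' bb'. apply le_bot_eq. unfold join. rewrite frame_distr.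
  apply sup_le. intros w [x [[-> | ->] ->]].
  - rewrite <- aa'. apply le_meet.
    + apply (le_trans L _ (meet a b)); [apply meet_le_l | apply meet_le_l].
    + apply meet_le_r.
  - rewrite <- bb'. apply le_meet.
    + apply (le_trans L _ (meet a b)); [apply meet_le_l | apply meet_le_r].
    + apply meet_le_r.
Qed.

Lemma meet_sup_le (A B : L -> Prop) c :
  (forall a b, A a -> B b -> le (meet a b) c) -> le (meet (sup A) (sup B)) c.
Proof.
  intro le_c. rewrite frame_distr. apply sup_le. intros y [b [Bb ->]].
  rewrite meetC, frame_distr. apply sup_le. intros z [a [Aa ->]].
  rewrite meetC. auto.
Qed.

End FrameFacts.

Section Phi.

Context {L : frame}.
Implicit Types U V : L -> Prop.

Lemma Phi_subset U V : (forall x, U x -> V x) -> le (Phi U) (Phi V).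
Proof.
  intro UV. apply sup_le. intros x [b [Ub xb]].
  apply le_sup. exists b. auto.
Qed.

Lemma Phi_setT : Phi (fun _ : L => True) = top L.
Proof.
  apply le_antisym; apply sup_le; intros x _; apply le_sup; [exact I |].
  exists (bot L). split; [exact I |]. apply le_bot_eq, meet_le_r.
Qed.

Lemma Phi_setI U V : upper_closed U -> upper_closed V ->
  Phi (fun x => U x /\ V x) = meet (Phi U) (Phi V).
Proof.
  intros upU upV. apply le_antisym.
  - apply le_meet; apply Phi_subset; tauto.
  - apply meet_sup_le. intros a b [a' [Ua' aa']] [b' [Vb' bb']].
    apply le_sup. exists (join a' b'). split.
    + split.
      * exact (upU _ _ (le_join_l a' b') Ua').
      * exact (upV _ _ (le_join_r a' b') Vb').
    + exact (meet_join_eq_bot a b a' b' aa' bb').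
Qed.

Lemma Phi_bigcup (I : Type) (U : I -> L -> Prop) :
  Phi (fun x => exists i, U i x) = sup (fun y => exists i, y = Phi (U i)).
Proof.
  apply le_antisym.
  - apply sup_le. intros x [b [[i Uib] xb]].
    apply (le_trans L _ (Phi (U i))).
    + apply le_sup. exists b. auto.
    + apply le_sup. now exists i.
  - apply sup_le. intros y [i ->].
    apply Phi_subset. intros x Uix. now exists i.
Qed.

End Phi.

Theorem mainTheorem3 (L : frame) (tau : (L -> Prop) -> Prop)
  (Htop : is_topology tau)
  (Hup : forall U, tau U -> upper_closed U) :
  Phi (fun _ : L => True) = top L /\
  (forall U V, tau U -> tau V ->
     Phi (fun x => U x /\ V x) = meet (Phi U) (Phi V)) /\
  (forall (I : Type) (U : I -> L -> Prop), (forall i, tau (U i)) ->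
     Phi (fun x => exists i, U i x) = sup (fun y => exists i, y = Phi (U i))).
Proof.
  split; [| split].
  - apply Phi_setT.
  - intros U V tauU tauV. apply Phi_setI; auto.
  - intros I U _. apply Phi_bigcup.
Qed.
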